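(* Let $\mathcal{C}$ be an $R$-coring, $F:\mathcal{M}^{\mathcal{C}}_R\to\mathcal{M}_R$ the forgetful functor and $G=\bullet\otimes_R\mathcal{C}:\mathcal{M}_R\to\mathcal{M}^{\mathcal{C}}_R$ its right adjoint. 1. Assume $G$ is naturally full. Then: (1) $F$ is naturally full (and conversely, if $F$ is naturally full and there exists $z\in\mathcal{C}$ with $\varepsilon_{\mathcal{C}}(z)=1_R$, then $G$ is naturally full); (2) $\mathcal{C}$ is finitely generated and projective as a left and as a right $R$-module; (3) $F$ is a Frobenius functor. 2. If $F$ is naturally full, then $F$ is separable.
   Context: An $R$-coring is an $R$-bimodule $\mathcal{C}$ with coassociative, counital $R$-bimodule maps $\Delta_{\mathcal{C}}:\mathcal{C}\to\mathcal{C}\otimes_R\mathcal{C}$ and $\varepsilon_{\mathcal{C}}:\mathcal{C}\to R$. $\mathcal{M}^{\mathcal{C}}_R$ is the category of right $\mathcal{C}$-comodules (right $R$-modules with right $R$-linear coassociative counital coaction $M\to M\otimes_R\mathcal{C}$; morphisms colinear $R$-linear maps); $G(N)=N\otimes_R\mathcal{C}$ with coaction $N\otimes_R\Delta_{\mathcal{C}}$. A functor is Frobenius if it has a right adjoint which is also a left adjoint. For a functor $F:\mathcal{A}\to\mathcal{B}$ let $\mathcal{F}_{A,A'}:\mathrm{Hom}_{\mathcal{A}}(A,A')\to\mathrm{Hom}_{\mathcal{B}}(FA,FA')$, $f\mapsto F(f)$; $F$ is separable if $\mathcal{F}$ has a left inverse natural in $A,A'$, and naturally full if $\mathcal{F}$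 has a right inverse natural in $A,A'$. *)

From HB Require Import structures.
From mathcomp Require Import all_boot all_algebra.
From mathcomp Require Import boolp.
From mathcomp Require Import freeg.
Import GRing.Theory.

Set Implicit Arguments.
Unset Strict Implicit.
Unset Printing Implicit Defensive.

Local Open Scope ring_scope.
Local Open Scope quotient_scope.

Section Gen.
Variable V : zmodType.
Variable rel : V -> Prop.
Definition gensub (x : V) : bool :=
  `[< forall S : {pred V}, GRing.zmod_closed S ->
        (forall y, rel y -> y \in S) -> x \in S >].
Lemma gensub_closed : GRing.zmod_closed (gensub : {pred V}).
Proof.
split.
  by apply/asboolP => S [S0 _] _.
move=> x y /asboolP Hx /asboolP Hy; apply/asboolP => S HS Hr.
by case: HS (HS) => _ HB HS; apply: HB; [apply: Hx | apply: Hy].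
Qed.
End Gen.
HB.instance Definition _ (V : zmodType) (rel : V -> Prop) :=
  GRing.isZmodClosed.Build V (@gensub V rel) (@gensub_closed V rel).

Definition linext (K : choiceType) (A : zmodType) (phi : K -> A)
  (D : {freeg K / int}) : A :=
  \sum_(k <- dom D) phi k *~ coeff k D.

Section Tensor.
Variable R : pzRingType.

Section Def.
Variables (M : zmodType) (am : M -> R -> M) (N : zmodType) (an : R -> N -> N).
Definition tfree : zmodType := {freeg (M * N)%type / int}.
Definition tgen (m : M) (n : N) : tfree := << (m, n) >>.
Definition trel (x : tfree) : Prop :=
  (exists m m' n, x = tgen (m + m') n - tgen m n - tgen m' n)
  \/ (exists m n n', x = tgen m (n + n') - tgen m n - tgen m n')
  \/ (exists m r n, x = tgen (am m r) n - tgen m (an r n)).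
Definition tens : zmodType :=
  Quotient.quot (GRing.ZmodClosed.clone tfree (@gensub tfree trel) _).
Definition tmul (m : M) (n : N) : tens := \pi_tens (tgen m n).
(* the additive map  tens -> A  induced by a (balanced, biadditive) phi,
   i.e. m (x) n |-> phi m n *)
Definition tlift (A : zmodType) (phi : M -> N -> A) (t : tens) : A :=
  linext (fun k => phi k.1 k.2) (repr t).
End Def.

Definition tfun (M : zmodType) (am : M -> R -> M) (N : zmodType) (an : R -> N -> N)
  (M' : zmodType) (am' : M' -> R -> M') (N' : zmodType) (an' : R -> N' -> N')
  (f : M -> M') (g : N -> N') (t : tens am an) : tens am' an' :=
  tlift (fun m n => tmul am' an' (f m) (g n)) t.
End Tensor.
Arguments tens {R M} am {N} an.
Arguments tmul {R M} am {N} an m n.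
Arguments tlift {R M am N an A} phi t.
Arguments tfun {R M} am {N} an {M'} am' {N'} an' f g t.

Section Modules.
Variable R : pzRingType.

Record rmod := RMod { rcar :> zmodType; ract : rcar -> R -> rcar }.
Record lmod := LMod { lcar :> zmodType; lact : R -> lcar -> lcar }.
Record bimod := BiMod { bcar :> zmodType; blact : R -> bcar -> bcar;
                        bract : bcar -> R -> bcar }.

Definition additive_map (A B : zmodType) (f : A -> B) : Prop :=
  forall x y, f (x + y) = f x + f y.

Definition is_rmod (M : rmod) : Prop :=
  [/\ forall (x y : M) r, ract (x + y) r = ract x r + ract y r,
      forall (x : M) r s, ract x (r + s) = ract x r + ract x s,
      forall (x : M) r s, ract (ract x r) s = ract x (r * s) &
      forall x : M, ract x 1 = x].

Definition is_lmod (M : lmod) : Prop :=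
  [/\ forall r (x y : M), lact r (x + y) = lact r x + lact r y,
      forall r s (x : M), lact (r + s) x = lact r x + lact s x,
      forall r s (x : M), lact r (lact s x) = lact (r * s) x &
      forall x : M, lact 1 x = x].

Definition rmod_of_bimod (B : bimod) : rmod := RMod (@bract B).
Definition lmod_of_bimod (B : bimod) : lmod := LMod (@blact B).

Definition is_bimod (B : bimod) : Prop :=
  [/\ is_lmod (lmod_of_bimod B), is_rmod (rmod_of_bimod B) &
      forall r (x : B) s, bract (blact r x) s = blact r (bract x s)].

Definition rlin (M N : rmod) (f : M -> N) : Prop :=
  additive_map f /\ forall x r, f (ract x r) = ract (f x) r.
Definition llin (M N : lmod) (f : M -> N) : Prop :=
  additive_map f /\ forall r x, f (lact r x) = lact r (f x).

Definition tensRB (M : rmod) (B : bimod) : rmod :=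
  RMod (fun (t : tens (@ract M) (@blact B)) r =>
          tfun (@ract M) (@blact B) (@ract M) (@blact B) id (fun b => bract b r) t).

Definition tensBB (B B' : bimod) : bimod :=
  @BiMod (tens (@bract B) (@blact B'))
    (fun r t => tfun (@bract B) (@blact B') (@bract B) (@blact B') (blact r) id t)
    (fun t r => tfun (@bract B) (@blact B') (@bract B) (@blact B') id (fun b => bract b r) t).

Section Assoc.
Variables (X : zmodType) (ax : X -> R -> X) (Y : bimod) (Z : zmodType)
          (az : R -> Z -> Z).
Definition XY_ract (t : tens ax (@blact Y)) (r : R) : tens ax (@blact Y) :=
  tfun ax (@blact Y) ax (@blact Y) id (fun y => bract y r) t.
Definition YZ_lact (r : R) (t : tens (@bract Y) az) : tens (@bract Y) az :=
  tfun (@bract Y) az (@bract Y) az (blact r) id t.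
Definition tassoc (t : tens XY_ract az) : tens ax YZ_lact :=
  tlift (fun u z => tlift (fun x y => tmul ax YZ_lact x (tmul (@bract Y) az y z)) u) t.
Definition tassoc_inv (t : tens ax YZ_lact) : tens XY_ract az :=
  tlift (fun x v => tlift (fun y z => tmul XY_ract az (tmul ax (@blact Y) x y) z) v) t.
End Assoc.

End Modules.
Arguments tassoc {R X ax Y Z az} t.
Arguments tassoc_inv {R X ax Y Z az} t.

Section Corings.
Variable R : pzRingType.

Record coring := Coring {
  cbim :> bimod R;
  cDelta : cbim -> tensBB cbim cbim;
  ceps : cbim -> R }.

Definition is_coring (C : coring) : Prop :=
  let D := @cDelta C in let e := @ceps C in
  [/\ is_bimod C,
      [/\ additive_map D,
          forall r c, D (blact r c) = blact r (D c) &
          forall c r, D (bract c r) = bract (D c) r],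
      [/\ additive_map e,
          forall r c, e (blact r c) = r * e c &
          forall c r, e (bract c r) = e c * r],
      (* coassociativity: (Delta (x) C) o Delta = (C (x) Delta) o Delta *)
      forall c,
        tassoc (tfun (@bract _ C) (@blact _ C) (@bract _ (tensBB C C)) (@blact _ C) D id (D c))
        = tfun (@bract _ C) (@blact _ C) (@bract _ C) (@blact _ (tensBB C C)) id D (D c) &
      (* counitality: (eps (x) C) o Delta = id = (C (x) eps) o Delta *)
      (forall c, tlift (fun x y => blact (e x) y) (D c) = c) /\
      (forall c, tlift (fun x y => bract x (e y)) (D c) = c)].

Variable C : coring.

Record comod := CoMod {
  cmod :> rmod R;
  coact : cmod -> tensRB cmod C }.

Definition is_comod (M : comod) : Prop :=
  let rho := @coact M in
  [/\ is_rmod M,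
      rlin (M := M) (N := tensRB M C) rho,
      (* coassociativity: (rho (x) C) o rho = (M (x) Delta) o rho *)
      forall m,
        tassoc (tfun (@ract _ M) (@blact _ C) (@ract _ (tensRB M C)) (@blact _ C)
                     rho id (rho m))
        = tfun (@ract _ M) (@blact _ C) (@ract _ M) (@blact _ (tensBB C C))
               id (@cDelta C) (rho m) &
      (* counitality: (M (x) eps) o rho = id  (via M (x)_R R = M) *)
      forall m, tlift (fun x c => ract x (ceps c)) (rho m) = m].

Definition comod_hom (M N : comod) (f : M -> N) : Prop :=
  rlin (M := M) (N := N) f /\
  forall m, coact (f m) =
    tfun (@ract _ M) (@blact _ C) (@ract _ N) (@blact _ C) f id (coact m).

Definition Gobj (N : rmod R) : comod :=
  @CoMod (tensRB N C)
    (fun t => tassoc_inv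
       (tfun (@ract _ N) (@blact _ C) (@ract _ N) (@blact _ (tensBB C C))
             id (@cDelta C) t)).
Definition Gmor (N N' : rmod R) (f : N -> N') : Gobj N -> Gobj N' :=
  tfun (@ract _ N) (@blact _ C) (@ract _ N') (@blact _ C) f id.

(* The forgetful functor F : M^C_R -> M_R is  M |-> cmod M,  f |-> f. *)

Definition F_naturally_full : Prop :=
  exists P : forall M M' : comod, (M -> M') -> (M -> M'),
    (forall M M' : comod, is_comod M -> is_comod M' ->
       forall g : M -> M', rlin (M := M) (N := M') g ->
         comod_hom (P M M' g) /\ P M M' g =1 g) /\
    (forall M0 M M' M'0 : comod,
       is_comod M0 -> is_comod M -> is_comod M' -> is_comod M'0 ->
       forall (f : M0 -> M) (h : M' -> M'0) (g : M -> M'),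
         comod_hom f -> comod_hom h -> rlin (M := M) (N := M') g ->
         P M0 M'0 (h \o g \o f) =1 h \o P M M' g \o f).

Definition F_separable : Prop :=
  exists Q : forall M M' : comod, (M -> M') -> (M -> M'),
    (forall M M' : comod, is_comod M -> is_comod M' ->
       (forall g : M -> M', rlin (M := M) (N := M') g -> comod_hom (Q M M' g)) /\
       (forall f : M -> M', comod_hom f -> Q M M' f =1 f)) /\
    (forall M0 M M' M'0 : comod,
       is_comod M0 -> is_comod M -> is_comod M' -> is_comod M'0 ->
       forall (f : M0 -> M) (h : M' -> M'0) (g : M -> M'),
         comod_hom f -> comod_hom h -> rlin (M := M) (N := M') g ->
         Q M0 M'0 (h \o g \o f) =1 h \o Q M M' g \o f).

Definition G_naturally_full : Prop :=
  exists P : forall N N' : rmod R, (Gobj N -> Gobj N') -> (N -> N'),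
    (forall N N' : rmod R, is_rmod N -> is_rmod N' ->
       forall g : Gobj N -> Gobj N', comod_hom g ->
         rlin (P N N' g) /\ Gmor (P N N' g) =1 g) /\
    (forall N0 N N' N'0 : rmod R,
       is_rmod N0 -> is_rmod N -> is_rmod N' -> is_rmod N'0 ->
       forall (f : N0 -> N) (h : N' -> N'0) (g : Gobj N -> Gobj N'),
         rlin f -> rlin h -> comod_hom g ->
         P N0 N'0 (Gmor h \o g \o Gmor f) =1 h \o P N N' g \o f).

(* H : M_R -> M^C_R is a functor; adjunctions are given by unit/counit
   natural transformations satisfying the triangle identities. *)
Definition F_Frobenius : Prop :=
  exists (Hobj : rmod R -> comod)
         (Hmor : forall N N' : rmod R, (N -> N') -> (Hobj N -> Hobj N')),
    [/\ forall N, is_rmod N -> is_comod (Hobj N),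
        forall (N N' : rmod R) (f : N -> N'), is_rmod N -> is_rmod N' ->
          rlin f -> comod_hom (Hmor N N' f),
        forall N : rmod R, is_rmod N -> Hmor N N id =1 id &
        forall (N1 N2 N3 : rmod R) (f : N1 -> N2) (g : N2 -> N3),
          is_rmod N1 -> is_rmod N2 -> is_rmod N3 -> rlin f -> rlin g ->
          Hmor N1 N3 (g \o f) =1 Hmor N2 N3 g \o Hmor N1 N2 f] /\
    (exists (eta : forall M : comod, M -> Hobj M)
            (eps : forall N : rmod R, Hobj N -> N),
      [/\ forall M : comod, is_comod M -> comod_hom (eta M),
          forall N : rmod R, is_rmod N -> rlin (M := Hobj N) (eps N),
          forall (M M' : comod) (f : M -> M'), is_comod M -> is_comod M' ->
            comod_hom f -> Hmor M M' f \o eta M =1 eta M' \o f,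
          forall (N N' : rmod R) (g : N -> N'), is_rmod N -> is_rmod N' ->
            rlin g -> g \o eps N =1 eps N' \o Hmor N N' g &
          (forall M : comod, is_comod M -> eps M \o eta M =1 id) /\
          (forall N : rmod R, is_rmod N ->
             Hmor (Hobj N) N (eps N) \o eta (Hobj N) =1 id)]) /\
    (exists (eta : forall N : rmod R, N -> Hobj N)
            (eps : forall M : comod, Hobj M -> M),
      [/\ forall N : rmod R, is_rmod N -> rlin (N := Hobj N) (eta N),
          forall M : comod, is_comod M -> comod_hom (eps M),
          forall (N N' : rmod R) (g : N -> N'), is_rmod N -> is_rmod N' ->
            rlin g -> Hmor N N' g \o eta N =1 eta N' \o g,
          forall (M M' : comod) (f : M -> M'), is_comod M -> is_comod M' ->
            comod_hom f -> f \o eps M =1 eps M' \o Hmor M M' f &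
          (forall N : rmod R, is_rmod N ->
             eps (Hobj N) \o Hmor N (Hobj N) (eta N) =1 id) /\
          (forall M : comod, is_comod M -> eps M \o eta M =1 id)]).

End Corings.

Section FGP.
Variable R : pzRingType.

Definition rfin_gen (M : rmod R) : Prop :=
  exists n (x : 'I_n -> M), forall m : M,
    exists r : 'I_n -> R, m = \sum_(i < n) ract (x i) (r i).
Definition rprojective (M : rmod R) : Prop :=
  forall A B : rmod R, is_rmod A -> is_rmod B ->
  forall p : A -> B, rlin p -> (forall b, exists a, p a = b) ->
  forall g : M -> B, rlin g ->
    exists h : M -> A, rlin h /\ forall m, p (h m) = g m.

Definition lfin_gen (M : lmod R) : Prop :=
  exists n (x : 'I_n -> M), forall m : M,
    exists r : 'I_n -> R, m = \sum_(i < n) lact (r i) (x i).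
Definition lprojective (M : lmod R) : Prop :=
  forall A B : lmod R, is_lmod A -> is_lmod B ->
  forall p : A -> B, llin p -> (forall b, exists a, p a = b) ->
  forall g : M -> B, llin g ->
    exists h : M -> A, llin h /\ forall m, p (h m) = g m.
End FGP.

(* Both hypotheses force the coring to be trivial.  If G is naturally full,
   apply the natural right inverse to the colinear map
   Delta o (r (x) c |-> r c) : G(R) -> G(C); it returns an R-linear
   nu : R -> C with nu (x) C = Delta o (r (x) c |-> r c), so e := nu(1)
   satisfies c = e eps(c), and naturality with respect to left
   multiplications of R gives r e = e r.  Then eps : C -> R is a bimodule
   isomorphism and every coaction is m |-> m (x) e.  Hence every R-linear map
   between comodules is colinear (the identity is a natural inverse of F on
   morphisms, so F is naturally full and separable), C is free of rank one on
   both sides, and G, whose coaction is t |-> t (x) e, is also a left adjoint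
   of F.  Conversely, if F is naturally full then c |-> z eps(c) is colinear,
   which forces z to be such an e as soon as eps(z) = 1. *)

From HB Require Import structures.
From mathcomp Require Import all_boot all_algebra.
From mathcomp Require Import boolp freeg.
Import GRing.Theory.
Set Implicit Arguments.
Unset Strict Implicit.
Unset Printing Implicit Defensive.
Local Open Scope ring_scope.
Local Open Scope quotient_scope.

(** * Additive maps and tensor products *)

Section AdditiveMap.
Variables (A B : zmodType) (f : A -> B).
Hypothesis f_add : additive_map f.

Lemma additive_map0 : f 0 = 0.
Proof. by apply/(addrI (f 0)); rewrite -f_add !addr0. Qed.

Lemma additive_mapN x : f (- x) = - f x.
Proof. by apply/(addrI (f x)); rewrite -f_add !subrr additive_map0. Qed.

Lemma additive_map_sum (I : Type) (s : seq I) (F : I -> A) :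
  f (\sum_(i <- s) F i) = \sum_(i <- s) f (F i).
Proof.
by elim: s => [|a s IH]; rewrite ?big_nil ?additive_map0 // !big_cons f_add IH.
Qed.

Lemma additive_mapMz x (z : int) : f (x *~ z) = f x *~ z.
Proof.
have fMn n : f (x *+ n) = f x *+ n.
  by elim: n => [|n IH]; rewrite ?mulr0n ?additive_map0 // !mulrS f_add IH.
case: z => n; first exact: fMn.
by rewrite NegzE !mulrNz additive_mapN -!pmulrn fMn.
Qed.
End AdditiveMap.

Lemma additive_map_comp (A B D : zmodType) (f : B -> D) (g : A -> B) :
  additive_map f -> additive_map g -> additive_map (f \o g).
Proof. by move=> f_add g_add x y /=; rewrite g_add f_add. Qed.

Lemma additive_map_add (A B : zmodType) (f g : A -> B) :
  additive_map f -> additive_map g -> additive_map (fun x => f x + g x).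
Proof. by move=> f_add g_add x y; rewrite f_add g_add addrACA. Qed.

Lemma gensub_gen (V : zmodType) (rel : V -> Prop) y : rel y -> gensub rel y.
Proof. by move=> rel_y; apply/asboolP => S _; apply. Qed.

Lemma gensub_ind (V : zmodType) (rel : V -> Prop) (S : {pred V}) :
  GRing.zmod_closed S -> (forall y, rel y -> y \in S) ->
  forall x, gensub rel x -> x \in S.
Proof. by move=> S_closed S_rel x /asboolP; apply. Qed.

Section Linext.
Variables (K : choiceType) (A : zmodType) (phi : K -> A).

Lemma linext_uniq (D : {freeg K / int}) (s : seq K) :
  uniq s -> {subset dom D <= s} ->
  linext phi D = \sum_(k <- s) phi k *~ coeff k D.
Proof.
move=> s_uniq domD_s; rewrite /linext [RHS](bigID (mem (dom D))) /=.
rewrite [X in _ = _ + X]big1 ?addr0; last first.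
  by move=> k /negbTE kD; rewrite coeff_outdom ?kD // mulr0z.
rewrite -[RHS]big_filter; apply: perm_big; apply: uniq_perm.
- exact: uniq_dom.
- exact: filter_uniq.
by move=> k; rewrite mem_filter; case kD: (k \in dom D) => //=; rewrite domD_s.
Qed.

Lemma linextD D1 D2 : linext phi (D1 + D2) = linext phi D1 + linext phi D2.
Proof.
set s := undup (dom D1 ++ dom D2 ++ dom (D1 + D2)).
have s_uniq : uniq s by exact: undup_uniq.
have sub1 : {subset dom D1 <= s} by move=> k kD; rewrite mem_undup !mem_cat kD.
have sub2 : {subset dom D2 <= s} by move=> k kD; rewrite mem_undup !mem_cat kD !orbT.
have sub3 : {subset dom (D1 + D2) <= s}.
  by move=> k kD; rewrite mem_undup !mem_cat kD !orbT.
rewrite (linext_uniq s_uniq sub1) (linext_uniq s_uniq sub2).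
rewrite (linext_uniq s_uniq sub3) -big_split /=.
by apply: eq_bigr => k _; rewrite coeffD mulrzDr.
Qed.

Lemma linext0 : linext phi 0 = 0.
Proof. by apply/(addrI (linext phi 0)); rewrite -linextD !addr0. Qed.

Lemma linextB D1 D2 : linext phi (D1 - D2) = linext phi D1 - linext phi D2.
Proof.
suff linextN D : linext phi (- D) = - linext phi D by rewrite linextD linextN.
by apply/(addrI (linext phi D)); rewrite -linextD !subrr linext0.
Qed.

Lemma linextU k : linext phi << k >> = phi k.
Proof. by rewrite /linext domU1 big_seq1 coeffU eqxx mulr1 mulr1z. Qed.
End Linext.

Section Tensor.
Variables (R : pzRingType) (M : zmodType) (am : M -> R -> M)
          (N : zmodType) (an : R -> N -> N).
Local Notation T := (tens am an).
Local Notation tmul := (tmul am an).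
Local Notation tlift := (@tlift R M am N an _).

Definition balanced (A : zmodType) (phi : M -> N -> A) : Prop :=
  [/\ forall m m' n, phi (m + m') n = phi m n + phi m' n,
      forall m n n', phi m (n + n') = phi m n + phi m n' &
      forall m r n, phi (am m r) n = phi m (an r n)].

Lemma tmul_rel (x y : tfree M N) : trel am an (x - y) -> \pi_T x = \pi_T y.
Proof. by move=> rel_xy; apply/eqmodP/gensub_gen. Qed.

Lemma tmulDl m m' n : tmul (m + m') n = tmul m n + tmul m' n.
Proof.
rewrite /tmul -raddfD; apply: tmul_rel; left.
by exists m, m', n; rewrite opprD addrA.
Qed.

Lemma tmulDr m n n' : tmul m (n + n') = tmul m n + tmul m n'.
Proof.
rewrite /tmul -raddfD; apply: tmul_rel; right; left.
by exists m, n, n'; rewrite opprD addrA.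
Qed.

Lemma tmul_balance m r n : tmul (am m r) n = tmul m (an r n).
Proof. by apply: tmul_rel; right; right; exists m, r, n. Qed.

Lemma balanced_tmul : balanced tmul.
Proof. by split; [exact: tmulDl | exact: tmulDr | exact: tmul_balance]. Qed.

Lemma additive_tmull n : additive_map (tmul^~ n).
Proof. by move=> x y; rewrite tmulDl. Qed.

Section Lift.
Variables (A : zmodType) (phi : M -> N -> A).
Hypothesis phi_bal : balanced phi.
Local Notation phik := (fun k : M * N => phi k.1 k.2).

Lemma linext_gensub D : gensub (trel am an) D -> linext phik D = 0.
Proof.
case: phi_bal => phiDl phiDr phi_balance.
have ker_closed : GRing.zmod_closed [pred D : tfree M N | linext phik D == 0].
  split; first by rewrite inE linext0.
  by move=> x y; rewrite !inE linextB => /eqP -> /eqP ->; rewrite subrr.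
move=> relD; apply/eqP; move: D relD; apply: (gensub_ind ker_closed) => y.
rewrite inE; case=> [[m [m' [n ->]]]|[[m [n [n' ->]]]|[m [r [n ->]]]]];
  rewrite /tgen !linextB !linextU /= ?phiDl ?phiDr ?phi_balance ?subrr //.
all: by rewrite addrAC addrK subrr.
Qed.

(* [tlift] is computed on [repr]; balancedness makes the choice of
   representative irrelevant. *)
Lemma tlift_pi D : tlift phi (\pi_T D) = linext phik D.
Proof.
have /eqmodP/linext_gensub : \pi_T (repr (\pi_T D)) = \pi_T D by rewrite reprK.
by rewrite linextB => /eqP; rewrite subr_eq0 => /eqP.
Qed.

Lemma tlift_tmul m n : tlift phi (tmul m n) = phi m n.
Proof. by rewrite /tmul tlift_pi linextU. Qed.

Lemma additive_tlift : additive_map (tlift phi).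
Proof. by move=> t u; rewrite -[t]reprK -[u]reprK -raddfD !tlift_pi linextD. Qed.
End Lift.

Lemma eq_tlift (A : zmodType) (phi psi : M -> N -> A) t :
  phi =2 psi -> tlift phi t = tlift psi t.
Proof.
by move=> eq_phi; rewrite /tlift /linext; apply: eq_bigr => k _; rewrite eq_phi.
Qed.

Lemma tlift_add (A : zmodType) (phi psi : M -> N -> A) t :
  tlift (fun m n => phi m n + psi m n) t = tlift phi t + tlift psi t.
Proof.
by rewrite /tlift /linext -big_split; apply: eq_bigr => k _; rewrite mulrzDl.
Qed.

Lemma additive_map_tlift (A B : zmodType) (f : A -> B) (phi : M -> N -> A) t :
  additive_map f -> f (tlift phi t) = tlift (fun m n => f (phi m n)) t.
Proof.
move=> f_add; rewrite /tlift /linext additive_map_sum //.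
by apply: eq_bigr => k _; rewrite additive_mapMz.
Qed.

Lemma tens_ext (A : zmodType) (f g : T -> A) :
  additive_map f -> additive_map g ->
  (forall m n, f (tmul m n) = g (tmul m n)) -> f =1 g.
Proof.
suff tens_linext (h : T -> A) : additive_map h ->
    forall t, h t = linext (fun k => h (tmul k.1 k.2)) (repr t).
  move=> f_add g_add eq_fg t; rewrite (tens_linext f) // (tens_linext g) //.
  by rewrite /linext; apply: eq_bigr => k _; rewrite eq_fg.
move=> h_add t; rewrite -{1}[t]reprK; set D := repr t.
rewrite -{1}(freeg_sumE D) raddf_sum additive_map_sum // /linext.
apply: eq_bigr => k _.
have -> : << coeff k D *g k >> = << k >> *~ coeff k D by rewrite freegU_mulz intz.
by rewrite raddfMz additive_mapMz //; case: k.
Qed.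
End Tensor.

(* [rlin] and [llin] for bare actions, since the actions on tensor products
   are not packaged as module records. *)
Section Compat.
Variable R : pzRingType.

Definition rcompat (M M' : zmodType) (am : M -> R -> M) (am' : M' -> R -> M')
  (f : M -> M') := additive_map f /\ forall m r, f (am m r) = am' (f m) r.
Definition lcompat (N N' : zmodType) (an : R -> N -> N) (an' : R -> N' -> N')
  (g : N -> N') := additive_map g /\ forall r n, g (an r n) = an' r (g n).

Lemma rcompat_id (M : zmodType) (am : M -> R -> M) : rcompat am am id.
Proof. by []. Qed.
Lemma lcompat_id (N : zmodType) (an : R -> N -> N) : lcompat an an id.
Proof. by []. Qed.
End Compat.

Section TensorMap.
Variables (R : pzRingType) (M : zmodType) (am : M -> R -> M)
          (N : zmodType) (an : R -> N -> N)
          (M' : zmodType) (am' : M' -> R -> M')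
          (N' : zmodType) (an' : R -> N' -> N')
          (f : M -> M') (g : N -> N').
Hypotheses (f_compat : rcompat am am' f) (g_compat : lcompat an an' g).
Local Notation fg := (tfun am an am' an' f g).

Lemma balanced_comp (A : zmodType) (psi : M' -> N' -> A) :
  balanced am' an' psi -> balanced am an (fun m n => psi (f m) (g n)).
Proof.
case: f_compat g_compat => f_add f_act [g_add g_act] [psiDl psiDr psi_bal].
by split=> *; rewrite ?f_add ?psiDl ?g_add ?psiDr ?f_act ?g_act ?psi_bal.
Qed.

Lemma tfun_tmul m n : fg (tmul am an m n) = tmul am' an' (f m) (g n).
Proof. exact/tlift_tmul/balanced_comp/balanced_tmul. Qed.

Lemma additive_tfun : additive_map fg.
Proof. exact/additive_tlift/balanced_comp/balanced_tmul. Qed.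

Lemma tlift_tfun (A : zmodType) (psi : M' -> N' -> A) t : balanced am' an' psi ->
  tlift psi (fg t) = tlift (fun m n => psi (f m) (g n)) t.
Proof.
move=> psi_bal; move: t.
apply: (tens_ext (f := fun t => tlift psi (fg t))); last first.
- by move=> m n; rewrite tfun_tmul !tlift_tmul //; exact: balanced_comp.
- exact/additive_tlift/balanced_comp.
exact: additive_map_comp (additive_tlift psi_bal) additive_tfun.
Qed.
End TensorMap.

Lemma tfun_id (R : pzRingType) (M : zmodType) (am : M -> R -> M)
  (N : zmodType) (an : R -> N -> N) t : tfun am an am an id id t = t.
Proof.
move: t; apply: (tens_ext (f := tfun am an am an id id) (g := id)) => //.
- exact: additive_tfun (rcompat_id _) (lcompat_id _).
by move=> m n; rewrite tfun_tmul.
Qed.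

Lemma tfun_comp (R : pzRingType) (M : zmodType) (am : M -> R -> M)
  (N : zmodType) (an : R -> N -> N) (M' : zmodType) (am' : M' -> R -> M')
  (N' : zmodType) (an' : R -> N' -> N') (M'' : zmodType) (am'' : M'' -> R -> M'')
  (N'' : zmodType) (an'' : R -> N'' -> N'') f1 g1 f2 g2 t :
  rcompat am am' f1 -> lcompat an an' g1 ->
  rcompat am' am'' f2 -> lcompat an' an'' g2 ->
  tfun am' an' am'' an'' f2 g2 (tfun am an am' an' f1 g1 t)
  = tfun am an am'' an'' (f2 \o f1) (g2 \o g1) t.
Proof.
by move=> f1_compat g1_compat f2_compat g2_compat; rewrite {1}/tfun tlift_tfun //;
  apply: balanced_comp f2_compat g2_compat _ _ (balanced_tmul _ _).
Qed.

Section Bimodule.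
Variables (R : pzRingType) (B : bimod R).
Hypothesis B_bimod : is_bimod B.

Lemma bract_lcompat r : lcompat (@blact R B) (@blact R B) (fun y => bract y r).
Proof.
case: B_bimod => _ [bractDl _ _ _] bactC; split; first by move=> x y; apply: bractDl.
by move=> s y; rewrite bactC.
Qed.

Lemma blact_rcompat r : rcompat (@bract R B) (@bract R B) (blact r).
Proof.
case: B_bimod => [[blactDr _ _ _] _ bactC]; split; first by move=> x y; apply: blactDr.
by move=> y s; rewrite bactC.
Qed.

Lemma tensRB_rmod (N : rmod R) : is_rmod (tensRB N B).
Proof.
have [_ [_ bractDr bractM bract1] _] := B_bimod; simpl in bractDr, bractM, bract1.
have act_additive r := additive_tfun (rcompat_id (@ract R N)) (bract_lcompat r).
split=> [x y r|x r s|x r s|x]; first exact: act_additive.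
- move: x; apply: (tens_ext (f := fun t => ract (r := tensRB N B) t (r + s))
    (g := fun t => ract (r := tensRB N B) t r + ract (r := tensRB N B) t s)).
  + exact: act_additive.
  + exact: additive_map_add (act_additive r) (act_additive s).
  by move=> m n /=; rewrite !tfun_tmul ?bractDr ?tmulDr //; exact: bract_lcompat.
- move: x; apply: (tens_ext
    (f := fun t => ract (r := tensRB N B) (ract (r := tensRB N B) t r) s)
    (g := fun t => ract (r := tensRB N B) t (r * s))).
  + exact: additive_map_comp (act_additive s) (act_additive r).
  + exact: act_additive.
  by move=> m n /=; rewrite !tfun_tmul ?bractM //; exact: bract_lcompat.
move: x; apply: (tens_ext (f := fun t => ract (r := tensRB N B) t 1) (g := id)) => //.
  exact: act_additive.
by move=> m n /=; rewrite tfun_tmul ?bract1 //; exact: bract_lcompat.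
Qed.
End Bimodule.

Section Associativity.
Variables (R : pzRingType) (X : zmodType) (ax : X -> R -> X) (Y : bimod R)
          (Z : zmodType) (az : R -> Z -> Z).
Hypothesis Y_bimod : is_bimod Y.
Local Notation XY := (@XY_ract R X ax Y).
Local Notation YZ := (@YZ_lact R Y Z az).
Local Notation tassoc := (@tassoc R X ax Y Z az).
Local Notation tassoc_inv := (@tassoc_inv R X ax Y Z az).

Definition tassoc_gen (z : Z) (x : X) (y : Y) :=
  tmul ax YZ x (tmul (@bract R Y) az y z).
Definition tassoc_inv_gen (x : X) (y : Y) (z : Z) :=
  tmul XY az (tmul ax (@blact R Y) x y) z.

Lemma balanced_tassoc_gen z : balanced ax (@blact R Y) (tassoc_gen z).
Proof.
split=> *; rewrite /tassoc_gen ?(tmulDl, tmulDr) //.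
by rewrite tmul_balance /YZ_lact tfun_tmul //; apply: blact_rcompat.
Qed.

Lemma balanced_tassoc_inv_gen x : balanced (@bract R Y) az (tassoc_inv_gen x).
Proof.
split=> *; rewrite /tassoc_inv_gen ?(tmulDl, tmulDr) //.
by rewrite -tmul_balance /XY_ract tfun_tmul //; apply: bract_lcompat.
Qed.

Lemma balanced_tassoc : balanced XY az (fun u z => tlift (tassoc_gen z) u).
Proof.
split=> *; first by rewrite additive_tlift //; exact: balanced_tassoc_gen.
  by rewrite -tlift_add; apply: eq_tlift => x y; rewrite /tassoc_gen !tmulDr.
rewrite /XY_ract tlift_tfun //; last exact: balanced_tassoc_gen.
  by apply: eq_tlift => x y; rewrite /tassoc_gen tmul_balance.
exact: bract_lcompat.
Qed.

Lemma balanced_tassoc_inv : balanced ax YZ (fun x v => tlift (tassoc_inv_gen x) v).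
Proof.
split=> *.
- by rewrite -tlift_add; apply: eq_tlift => y z; rewrite /tassoc_inv_gen !tmulDl.
- by rewrite additive_tlift //; exact: balanced_tassoc_inv_gen.
rewrite /YZ_lact tlift_tfun //; last exact: balanced_tassoc_inv_gen.
  by apply: eq_tlift => y z; rewrite /tassoc_inv_gen tmul_balance.
exact: blact_rcompat.
Qed.

Lemma additive_tassoc : additive_map tassoc.
Proof. exact: additive_tlift balanced_tassoc. Qed.

Lemma additive_tassoc_inv : additive_map tassoc_inv.
Proof. exact: additive_tlift balanced_tassoc_inv. Qed.

Lemma tassoc_tmul x y z :
  tassoc (tmul XY az (tmul ax (@blact R Y) x y) z)
  = tmul ax YZ x (tmul (@bract R Y) az y z).
Proof.
rewrite /tassoc tlift_tmul; last exact: balanced_tassoc.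
by rewrite tlift_tmul //; exact: balanced_tassoc_gen.
Qed.

Lemma tassoc_inv_tmul x v : tassoc_inv (tmul ax YZ x v) = tlift (tassoc_inv_gen x) v.
Proof. by rewrite /tassoc_inv tlift_tmul //; exact: balanced_tassoc_inv. Qed.

Lemma tassocK w : tassoc_inv (tassoc w) = w.
Proof.
move: w; apply: (tens_ext (f := tassoc_inv \o tassoc) (g := id)) => //.
  exact: additive_map_comp additive_tassoc_inv additive_tassoc.
move=> u z /=; rewrite /tassoc tlift_tmul; last exact: balanced_tassoc.
rewrite additive_map_tlift; last exact: additive_tassoc_inv.
rewrite (eq_tlift _ (psi := fun x y => tassoc_inv_gen x y z)); last first.
  by move=> x y; rewrite tassoc_inv_tmul tlift_tmul //; exact: balanced_tassoc_inv_gen.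
have gen_bal : balanced ax (@blact R Y) (fun x y => tassoc_inv_gen x y z).
  by split=> *; rewrite /tassoc_inv_gen ?(tmulDl, tmulDr) // tmul_balance.
move: u; apply: (tens_ext (g := fun u => tmul XY az u z)).
- exact: additive_tlift gen_bal.
- exact: additive_tmull.
by move=> x y; rewrite tlift_tmul.
Qed.
End Associativity.
Arguments tassoc_tmul {R X ax Y Z az}.
Arguments tassoc_inv_tmul {R X ax Y Z az}.

Definition regular_rmod (R : pzRingType) : rmod R := RMod (@GRing.mul R).

Lemma regular_rmod_is_rmod (R : pzRingType) : is_rmod (regular_rmod R).
Proof. by split=> *; rewrite /= ?mulrDl ?mulrDr ?mulrA ?mulr1. Qed.

(** * Corings, comodules and the functor G *)

Section Coring.
Variables (R : pzRingType) (C : coring R).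
Hypothesis C_coring : is_coring C.
Local Notation eps := (@ceps R C).
Local Notation D := (@cDelta R C).
Local Notation bl := (@blact R C).
Local Notation br := (@bract R C).
Local Notation RC := (rmod_of_bimod C).
Local Notation Gmor := (@Gmor R C _ _).

Lemma C_bimod : is_bimod C. Proof. by case: C_coring. Qed.
Lemma additive_eps : additive_map eps. Proof. by case: C_coring => _ _ []. Qed.
Lemma eps_blact r c : eps (bl r c) = r * eps c. Proof. by case: C_coring => _ _ []. Qed.
Lemma eps_bract c r : eps (br c r) = eps c * r. Proof. by case: C_coring => _ _ []. Qed.
Lemma additive_Delta : additive_map D. Proof. by case: C_coring => _ []. Qed.
Lemma Delta_blact r c : D (bl r c) = blact r (D c). Proof. by case: C_coring => _ []. Qed.
Lemma Delta_bract c r : D (br c r) = bract (D c) r. Proof. by case: C_coring => _ []. Qed.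
Lemma Delta_coassoc c :
  tassoc (tfun br bl (@bract R (tensBB C C)) bl D id (D c))
  = tfun br bl br (@blact R (tensBB C C)) id D (D c).
Proof. by case: C_coring. Qed.
Lemma Delta_counitl c : tlift (fun x y => bl (eps x) y) (D c) = c.
Proof. by case: C_coring => _ _ _ _ []. Qed.
Lemma Delta_counitr c : tlift (fun x y => br x (eps y)) (D c) = c.
Proof. by case: C_coring => _ _ _ _ []. Qed.

Lemma Delta_lcompat : lcompat bl (@blact R (tensBB C C)) D.
Proof. by split; [exact: additive_Delta | exact: Delta_blact]. Qed.

Lemma rlin_Delta : rlin (M := RC) (N := tensRB RC C) D.
Proof. by split; [exact: additive_Delta | exact: Delta_bract]. Qed.

Lemma C_rmod : is_rmod RC. Proof. by case: C_bimod. Qed.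
Lemma bractDr x r s : br x (r + s) = br x r + br x s.
Proof. by case: C_rmod => _ + _ _; apply. Qed.
Lemma bractM x r s : br (br x r) s = br x (r * s).
Proof. by case: C_rmod => _ _ + _; apply. Qed.
Lemma blactDl r s x : bl (r + s) x = bl r x + bl s x.
Proof. by case: C_bimod => [[_ + _ _] _ _]; apply. Qed.
Lemma blactDr r x y : bl r (x + y) = bl r x + bl r y.
Proof. by case: C_bimod => [[+ _ _ _] _ _]; apply. Qed.
Lemma blactM r s x : bl r (bl s x) = bl (r * s) x.
Proof. by case: C_bimod => [[_ _ + _] _ _]; apply. Qed.
Lemma blact1 x : bl 1 x = x.
Proof. by case: C_bimod => [[_ _ _ +] _ _]; apply. Qed.
Lemma bactC r x s : br (bl r x) s = bl r (br x s).
Proof. by case: C_bimod => [_ _ +]; apply. Qed.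

Section Counit.
Variable N : rmod R.
Hypothesis N_rmod : is_rmod N.
Local Notation tmulN := (tmul (@ract R N) bl).

Definition tcounit : tensRB N C -> N := tlift (fun x c => ract x (eps c)).

Lemma balanced_tcounit : balanced (@ract R N) bl (fun x c => ract x (eps c)).
Proof.
case: N_rmod => ractDl ractDr ractM _.
by split=> *; rewrite ?additive_eps ?ractDl ?ractDr // ractM eps_blact.
Qed.

Lemma tcounit_tmul x c : tcounit (tmulN x c) = ract x (eps c).
Proof. exact/tlift_tmul/balanced_tcounit. Qed.

Lemma rlin_tcounit : rlin tcounit.
Proof.
have tcounit_add : additive_map tcounit by exact/additive_tlift/balanced_tcounit.
split=> // t r; move: t.
have [ractDl _ ractM _] := N_rmod.
apply: (tens_ext (f := fun t => tcounit (ract (r := tensRB N C) t r))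
                 (g := fun t => ract (tcounit t) r)).
- apply: additive_map_comp tcounit_add _.
  exact: additive_tfun (rcompat_id _) (bract_lcompat C_bimod r).
- by move=> x y; rewrite tcounit_add ractDl.
move=> m n /=; rewrite tfun_tmul; last exact: bract_lcompat C_bimod r.
  by rewrite !tcounit_tmul eps_bract ractM.
exact: rcompat_id.
Qed.
End Counit.
Arguments tcounit : clear implicits.

Lemma rlin_Gmor (N N' : rmod R) (f : N -> N') : rlin f -> rlin (Gmor f).
Proof.
move=> f_rlin; have Gf_add := additive_tfun f_rlin (lcompat_id bl).
split=> // t r; move: t.
have ract_add (M : rmod R) :=
  additive_tfun (rcompat_id (@ract R M)) (bract_lcompat C_bimod r).
apply: (tens_ext (f := fun t => Gmor f (ract (r := tensRB N C) t r))
                 (g := fun t => ract (r := tensRB N' C) (Gmor f t) r)).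
- exact: additive_map_comp Gf_add (ract_add N).
- exact: additive_map_comp (ract_add N') Gf_add.
by move=> m n /=; rewrite /Gmor !tfun_tmul //; exact: bract_lcompat C_bimod r.
Qed.

Lemma Gmor_tmul (N N' : rmod R) (f : N -> N') n c : rlin f ->
  Gmor f (tmul (@ract R N) bl n c) = tmul (@ract R N') bl (f n) c.
Proof. by move=> f_rlin; exact (tfun_tmul f_rlin (lcompat_id _) n c). Qed.

Lemma Gmor_id (N : rmod R) (t : Gobj C N) : Gmor id t = t.
Proof. exact: tfun_id. Qed.

Lemma Gmor_comp (N1 N2 N3 : rmod R) (f : N1 -> N2) (g : N2 -> N3) :
  rlin f -> rlin g -> Gmor (g \o f) =1 Gmor g \o Gmor f.
Proof.
move=> f_rlin g_rlin t.
exact (esym (tfun_comp t f_rlin (lcompat_id _) g_rlin (lcompat_id _))).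
Qed.

Lemma tcounit_natural (N N' : rmod R) (f : N -> N') :
  is_rmod N -> is_rmod N' -> rlin f ->
  forall t, f (tcounit N t) = tcounit N' (Gmor f t).
Proof.
move=> N_rmod N'_rmod f_rlin; have [f_add f_ract] := f_rlin.
have [tcounit_add _] := rlin_tcounit N_rmod.
have [tcounit'_add _] := rlin_tcounit N'_rmod.
apply: tens_ext.
- exact: additive_map_comp f_add tcounit_add.
- exact: additive_map_comp tcounit'_add (rlin_Gmor f_rlin).1.
by move=> m n; rewrite Gmor_tmul // !tcounit_tmul //; exact: f_ract.
Qed.

Lemma comod_hom_comp (M1 M2 M3 : comod C) (f : M1 -> M2) (g : M2 -> M3) :
  comod_hom f -> comod_hom g -> comod_hom (g \o f).
Proof.
move=> [[f_add f_ract] f_coact] [[g_add g_ract] g_coact].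
split; first by split=> [x y|x r] /=; rewrite ?f_add ?g_add ?f_ract ?g_ract.
move=> m /=; rewrite g_coact f_coact tfun_comp //; exact: lcompat_id.
Qed.

Definition regular_comod : comod C := @CoMod R C RC D.

Lemma regular_comod_is_comod : is_comod regular_comod.
Proof.
by split; [exact: C_rmod | exact: rlin_Delta | exact: Delta_coassoc |
          exact: Delta_counitr].
Qed.

Definition F_full : Prop :=
  forall M M' : comod C, is_comod M -> is_comod M' ->
  forall g : M -> M', rlin g -> comod_hom g.

Lemma F_naturally_full_full : F_naturally_full C -> F_full.
Proof.
move=> [P [P_inv _]] M M' M_comod M'_comod g g_rlin.
have [Pg_hom /funext <-] := P_inv M M' M_comod M'_comod g g_rlin.
exact: Pg_hom.
Qed.

Lemma F_full_naturally_full : F_full -> F_naturally_full C.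
Proof.
move=> F_full_C; exists (fun M M' g => g); split=> //.
by move=> M M' M_comod M'_comod g g_rlin; split=> //; exact: F_full_C.
Qed.

Lemma F_full_separable : F_full -> F_separable C.
Proof.
move=> F_full_C; exists (fun M M' g => g); split=> //.
by move=> M M' M_comod M'_comod; split=> // g; exact: F_full_C.
Qed.

(* Such an [e] makes [eps] a bimodule isomorphism [C ~= R], with inverse [r |-> e r]. *)
Definition trivializing (e : C) : Prop :=
  (forall c, br e (eps c) = c) /\ (forall r, bl r e = br e r).

Lemma F_full_trivializing z : F_full -> eps z = 1 -> trivializing z.
Proof.
move=> F_full_C eps_z.
pose phi c := br z (eps c).
have phi_rlin : rlin (M := RC) (N := RC) phi.
  split=> [x y|c r]; first by rewrite /phi additive_eps bractDr.
  by rewrite /phi /= eps_bract bractM.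
have [_ phi_coact] :=
  F_full_C _ _ regular_comod_is_comod regular_comod_is_comod phi phi_rlin.
have counitl_bal : balanced br bl (fun x y => bl (eps x) y).
  by split=> *; rewrite ?additive_eps ?blactDl ?blactDr // eps_bract blactM.
have z_split c : phi c = c.
  have := congr1 (tlift (fun x y => bl (eps x) y)) (phi_coact c).
  rewrite /= Delta_counitl tlift_tfun // => ->.
  rewrite -[RHS]Delta_counitl; apply: eq_tlift => x y.
  by rewrite /phi eps_bract eps_z mul1r.
split=> [|r]; first exact: z_split.
by rewrite -[LHS]z_split /phi eps_blact eps_z mulr1.
Qed.

Local Notation RR := (regular_rmod R).
Local Notation tmulR := (tmul (@ract R RR) bl).

Definition tlact : Gobj C RR -> C := tlift (fun (r : R) c => bl r c).

Lemma balanced_tlact : balanced (@ract R RR) bl (fun (r : R) c => bl r c).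
Proof. by split=> *; rewrite ?blactDl ?blactDr ?blactM. Qed.

Lemma tlact_tmul r c : tlact (tmulR r c) = bl r c.
Proof. exact/tlift_tmul/balanced_tlact. Qed.

Lemma rlin_tlact : rlin (M := Gobj C RR) (N := RC) tlact.
Proof.
have tlact_add : additive_map tlact by exact/additive_tlift/balanced_tlact.
split=> // t r; move: t.
apply: (tens_ext (f := fun t => tlact (ract (r := Gobj C RR) t r))
                 (g := fun t => br (tlact t) r)).
- apply: additive_map_comp tlact_add _.
  exact: additive_tfun (rcompat_id _) (bract_lcompat C_bimod r).
- by move=> x y; rewrite tlact_add; case: C_rmod => + _ _ _; apply.
move=> s c /=; rewrite tfun_tmul; last exact: bract_lcompat C_bimod r.
  by rewrite !tlact_tmul bactC.
exact: rcompat_id.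
Qed.

Lemma tlact_hom : comod_hom (M := Gobj C RR) (N := regular_comod) tlact.
Proof.
split; first exact: rlin_tlact.
have tlact_add : additive_map tlact by exact/additive_tlift/balanced_tlact.
apply: tens_ext => [||r c].
- by move=> x y /=; rewrite tlact_add additive_Delta.
- exact (additive_map_comp (additive_tfun rlin_tlact (lcompat_id _))
          (additive_map_comp (additive_tassoc_inv C_bimod)
             (additive_tfun (rcompat_id _) Delta_lcompat))).
rewrite /= tlact_tmul Delta_blact (tfun_tmul (rcompat_id _) Delta_lcompat).
rewrite (tassoc_inv_tmul C_bimod) additive_map_tlift; last first.
  exact: additive_tfun rlin_tlact (lcompat_id _).
rewrite /= /tfun; apply: eq_tlift => y z.
rewrite /tassoc_inv_gen tlift_tmul ?tlact_tmul //.
exact/(balanced_comp rlin_tlact (lcompat_id _))/balanced_tmul.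
Qed.

Lemma Delta_hom : comod_hom (M := regular_comod) (N := Gobj C RC) D.
Proof.
split=> [|c]; first exact: rlin_Delta.
by have := congr1 tassoc_inv (Delta_coassoc c); rewrite (tassocK C_bimod) => /esym.
Qed.

Definition Delta_tlact : Gobj C RR -> Gobj C RC := D \o tlact.

Lemma Delta_tlact_hom : comod_hom Delta_tlact.
Proof. exact: comod_hom_comp tlact_hom Delta_hom. Qed.

Lemma rlin_lmul s : rlin (M := RR) (N := RR) ( *%R s).
Proof. by split=> [x y|x r]; rewrite /= ?mulrDr ?mulrA. Qed.

Lemma rlin_blact s : rlin (M := RC) (N := RC) (bl s).
Proof. by split=> [x y|x r]; rewrite /= ?blactDr ?bactC. Qed.

Lemma Delta_tlact_lmul s t :
  Delta_tlact (Gmor (( *%R s) : RR -> RR) t) = Gmor (bl s : RC -> RC) (Delta_tlact t).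
Proof.
have [[g_add _] _] := Delta_tlact_hom.
move: t; apply: tens_ext => [||r c].
- exact: additive_map_comp g_add (additive_tfun (rlin_lmul s) (lcompat_id _)).
- exact: additive_map_comp (additive_tfun (rlin_blact s) (lcompat_id _)) g_add.
rewrite Gmor_tmul; last exact: rlin_lmul.
by rewrite /Delta_tlact /= !tlact_tmul -blactM Delta_blact.
Qed.

Lemma G_naturally_full_trivializing :
  G_naturally_full C -> exists e : C, trivializing e.
Proof.
move=> [P [P_inv P_natural]].
have RR_rmod := regular_rmod_is_rmod R.
have [Pg_rlin Pg_inv] := P_inv RR RC RR_rmod C_rmod _ Delta_tlact_hom.
exists (P RR RC Delta_tlact 1); split=> [c|s].
  have := Pg_inv (tmulR 1 c); rewrite Gmor_tmul // /Delta_tlact /= tlact_tmul blact1.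
  move=> Delta_c; rewrite -[RHS]Delta_counitr -Delta_c tlift_tmul //.
  exact: balanced_tcounit C_rmod.
have id_rlin (N : rmod R) : rlin (@id N) by [].
have Delta_tlact_natural : Gmor id \o Delta_tlact \o Gmor (( *%R s) : RR -> RR)
                         = Gmor (bl s : RC -> RC) \o Delta_tlact \o Gmor id.
  by apply: funext => t /=; rewrite !Gmor_id Delta_tlact_lmul.
have := P_natural _ _ _ _ RR_rmod RR_rmod C_rmod C_rmod _ _ _
  (rlin_lmul s) (id_rlin _) Delta_tlact_hom 1.
rewrite Delta_tlact_natural (P_natural _ _ _ _ RR_rmod RR_rmod C_rmod C_rmod _ _ _
  (id_rlin _) (rlin_blact s) Delta_tlact_hom 1) /= mulr1 => ->.
by rewrite -[s in LHS]mul1r; exact: Pg_rlin.2 1 s.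
Qed.

(** * Trivial corings *)

Section Trivializing.
Variable e : C.
Hypothesis e_triv : trivializing e.

Lemma eps_blact_e c : bl (eps c) e = c.
Proof. by case: e_triv => e_split e_central; rewrite e_central e_split. Qed.

Lemma bract_eps_e c : br c (eps e) = c.
Proof.
by rewrite -[c in LHS]eps_blact_e bactC; case: e_triv => -> _; rewrite eps_blact_e.
Qed.

Definition eta_e (N : rmod R) : N -> Gobj C N := tmul (@ract R N) bl ^~ e.
Arguments eta_e : clear implicits.

Section TensorE.
Variable N : rmod R.
Local Notation tmulN := (tmul (@ract R N) bl).

Lemma tmul_e x c : tmulN x c = tmulN (ract x (eps c)) e.
Proof. by rewrite tmul_balance eps_blact_e. Qed.

Lemma tmul_e_ract x r : tmulN (ract x r) e = ract (r := tensRB N C) (tmulN x e) r.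
Proof.
rewrite /= tfun_tmul; last exact: bract_lcompat C_bimod r.
  by rewrite tmul_balance; case: e_triv => _ ->.
exact: rcompat_id.
Qed.

Lemma rlin_eta_e : rlin (M := N) (N := Gobj C N) (eta_e N).
Proof. by split=> [x y|x r]; rewrite /eta_e ?tmulDl ?tmul_e_ract. Qed.

Lemma ract_eps_e (t : tensRB N C) : ract t (eps e) = t.
Proof.
move: t.
apply: (tens_ext (f := fun t => ract (r := tensRB N C) t (eps e)) (g := id)) => //.
  exact: additive_tfun (rcompat_id _) (bract_lcompat C_bimod _).
move=> m n /=; rewrite tfun_tmul ?bract_eps_e //; exact: bract_lcompat C_bimod _.
Qed.

Hypothesis N_rmod : is_rmod N.

Lemma tens_tmul_e t : t = tmulN (tcounit N t) e.
Proof.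
have [tcounit_add _] := rlin_tcounit N_rmod.
move: t; apply: (tens_ext (f := id)) => //.
- by move=> x y; rewrite tcounit_add tmulDl.
by move=> m n /=; rewrite tcounit_tmul // tmul_e.
Qed.
End TensorE.

Lemma Delta_e c : D c = tmul br bl c e.
Proof. by rewrite {1}[D c](tens_tmul_e C_rmod); congr tmul; exact: Delta_counitr. Qed.

Lemma coact_e (M : comod C) : is_comod M -> forall m, coact m = tmul (@ract R M) bl m e.
Proof.
case=> M_rmod _ _ counit m; rewrite {1}[coact m](tens_tmul_e M_rmod).
by congr tmul; exact: counit.
Qed.

Lemma trivializing_F_full : F_full.
Proof.
move=> M M' M_comod M'_comod g g_rlin; split=> // m.
by rewrite (coact_e M'_comod) (coact_e M_comod) tfun_tmul //; exact: lcompat_id.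
Qed.

Lemma trivializing_G_naturally_full : G_naturally_full C.
Proof.
exists (fun N N' g n => tcounit N' (g (eta_e N n))); split.
  move=> N N' N_rmod N'_rmod g [[g_add g_ract] _].
  have [tcounit_add tcounit_ract] := rlin_tcounit N'_rmod.
  set Pg := fun n => _.
  have Pg_rlin : rlin Pg.
    split=> [x y|n r]; first by rewrite /Pg /eta_e tmulDl g_add tcounit_add.
    by rewrite /Pg /eta_e tmul_e_ract g_ract tcounit_ract.
  split=> //; apply: tens_ext => [||n c].
  - exact: additive_tfun Pg_rlin (lcompat_id _).
  - exact: g_add.
  rewrite Gmor_tmul // tmul_e (tmul_e n c).
  by case: Pg_rlin => _ <-; rewrite /Pg /eta_e -tens_tmul_e.
move=> N0 N N' N'0 _ _ N'_rmod N'0_rmod f h g f_rlin h_rlin _ n /=.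
by rewrite Gmor_tmul // (tcounit_natural N'_rmod N'0_rmod h_rlin).
Qed.

Lemma trivializing_rfgp : rfin_gen RC /\ rprojective RC.
Proof.
split.
  exists 1%N, (fun _ => e) => c; exists (fun _ => eps c).
  by rewrite big_ord1 /= e_triv.1.
move=> A B [_ ractDr ractM _] _ p [_ p_ract] p_surj g [_ g_ract].
have [a pa] := p_surj (g e).
exists (fun c => ract a (eps c)); split.
  by split=> [x y|c r]; rewrite /= ?additive_eps ?ractDr ?eps_bract ?ractM.
by move=> c; rewrite p_ract pa -g_ract /= e_triv.1.
Qed.

Lemma trivializing_lfgp : lfin_gen (lmod_of_bimod C) /\ lprojective (lmod_of_bimod C).
Proof.
split.
  exists 1%N, (fun _ => e) => c; exists (fun _ => eps c).
  by rewrite big_ord1 /= eps_blact_e.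
move=> A B [_ lactDl lactM _] _ p [_ p_lact] p_surj g [_ g_lact].
have [a pa] := p_surj (g e).
exists (fun c => lact (eps c) a); split.
  by split=> [x y|r c]; rewrite /= ?additive_eps ?lactDl ?eps_blact ?lactM.
by move=> c; rewrite p_lact pa -g_lact /= eps_blact_e.
Qed.

Lemma Gobj_coact_e (N : rmod R) (t : Gobj C N) :
  coact t = tmul (@ract R (Gobj C N)) bl t e.
Proof.
move: t; apply: tens_ext => [||n c] /=.
- exact: additive_map_comp (additive_tassoc_inv C_bimod)
                           (additive_tfun (rcompat_id _) Delta_lcompat).
- exact: additive_tmull.
rewrite (tfun_tmul (rcompat_id _) Delta_lcompat) Delta_e (tassoc_inv_tmul C_bimod).
by rewrite tlift_tmul //; exact: balanced_tassoc_inv_gen C_bimod n.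
Qed.

Lemma Gobj_is_comod (N : rmod R) : is_comod (Gobj C N).
Proof.
have coact_rlin :
    rlin (M := Gobj C N) (N := tensRB (Gobj C N) C) (@coact R C (Gobj C N)).
  by split=> [x y|t r]; rewrite !Gobj_coact_e ?tmulDl ?tmul_e_ract.
split=> [||t|t]; [exact (tensRB_rmod C_bimod N) | exact: coact_rlin | |].
- rewrite Gobj_coact_e (tfun_tmul coact_rlin (lcompat_id _)) Gobj_coact_e.
  by rewrite (tassoc_tmul C_bimod) (tfun_tmul (rcompat_id _) Delta_lcompat) Delta_e.
rewrite Gobj_coact_e tlift_tmul ?ract_eps_e //.
exact (balanced_tcounit (tensRB_rmod C_bimod N)).
Qed.

Lemma Gmor_hom (N N' : rmod R) (f : N -> N') :
  rlin f -> comod_hom (M := Gobj C N) (N := Gobj C N') (Gmor f).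
Proof.
move=> f_rlin; have Gf_rlin := rlin_Gmor f_rlin; split=> // t.
by rewrite !Gobj_coact_e (tfun_tmul Gf_rlin (lcompat_id _)).
Qed.

Lemma tcounit_eta_e (M : comod C) : is_comod M -> forall m, tcounit M (eta_e M m) = m.
Proof.
by move=> M_comod m; rewrite /eta_e -coact_e //; case: M_comod => _ _ _; apply.
Qed.

Lemma eta_e_hom (M : comod C) :
  is_comod M -> comod_hom (M := M) (N := Gobj C M) (eta_e M).
Proof.
move=> M_comod; split=> [|m]; first exact: rlin_eta_e.
by rewrite Gobj_coact_e (coact_e M_comod) (tfun_tmul (@rlin_eta_e M) (lcompat_id _)).
Qed.

Lemma tcounit_hom (M : comod C) :
  is_comod M -> comod_hom (M := Gobj C M) (N := M) (tcounit M).
Proof.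
move=> M_comod; have [M_rmod _ _ _] := M_comod; have tcounit_rlin := rlin_tcounit M_rmod.
split=> // t; rewrite Gobj_coact_e (coact_e M_comod).
by rewrite (tfun_tmul tcounit_rlin (lcompat_id _)).
Qed.

Lemma tcounit_Gmor_eta_e (N : rmod R) (t : Gobj C N) :
  tcounit (Gobj C N) (Gmor (eta_e N) t) = t.
Proof.
have [tcounit_add _] := rlin_tcounit (tensRB_rmod C_bimod N).
move: t; apply: (tens_ext (g := id)) => [||n c] //.
  exact: additive_map_comp tcounit_add (additive_tfun (@rlin_eta_e N) (lcompat_id _)).
rewrite Gmor_tmul ?tcounit_tmul; last exact: rlin_eta_e.
  by rewrite /eta_e -tmul_e_ract -tmul_e.
exact (tensRB_rmod C_bimod N).
Qed.

Lemma trivializing_F_Frobenius : F_Frobenius C.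
Proof.
have id_rlin (N : rmod R) : rlin (@id N) by [].
exists (@Gobj R C), (fun N N' f => Gmor f); split; [|split].
- split=> [N _|N N' f _ _|N _ t|N1 N2 N3 f g _ _ _ f_rlin g_rlin t].
  + exact: Gobj_is_comod.
  + exact: Gmor_hom.
  + exact: Gmor_id.
  + exact: Gmor_comp.
- exists (fun M => eta_e M), tcounit; split.
  + exact: eta_e_hom.
  + exact: rlin_tcounit.
  + by move=> M M' f _ _ [f_rlin _] m; rewrite /= Gmor_tmul.
  + by move=> N N' g N_rmod N'_rmod g_rlin t; rewrite /= (tcounit_natural N_rmod N'_rmod).
  split=> [M M_comod m|N N_rmod t]; first exact: tcounit_eta_e.
  by rewrite /= Gmor_tmul -?tens_tmul_e //; exact: rlin_tcounit.
- exists eta_e, tcounit; split.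
  + move=> N _; exact: rlin_eta_e.
  + exact: tcounit_hom.
  + by move=> N N' g _ _ g_rlin n; rewrite /= Gmor_tmul.
  + move=> M M' f [M_rmod _ _ _] [M'_rmod _ _ _] [f_rlin _] t.
    by rewrite /= (tcounit_natural M_rmod M'_rmod).
  split=> [N _ t|M M_comod m]; first exact: tcounit_Gmor_eta_e.
  exact: tcounit_eta_e.
Qed.
End Trivializing.
End Coring.

Theorem corollary3p15 (R : pzRingType) (C : coring R) :
  is_coring C ->
  (* 1. G naturally full implies (1), (2), (3) *)
  (G_naturally_full C ->
     [/\ F_naturally_full C,
         (rfin_gen (rmod_of_bimod C) /\ rprojective (rmod_of_bimod C)) /\
         (lfin_gen (lmod_of_bimod C) /\ lprojective (lmod_of_bimod C)) &
         F_Frobenius C]) /\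
  (* 1.(1), converse *)
  (F_naturally_full C -> (exists z : C, ceps z = 1) -> G_naturally_full C) /\
  (* 2. *)
  (F_naturally_full C -> F_separable C).
Proof.
move=> C_coring; split; [|split].
- move=> /(G_naturally_full_trivializing C_coring) [e e_triv]; split.
  + exact/F_full_naturally_full/(trivializing_F_full C_coring e_triv).
  + exact: conj (trivializing_rfgp C_coring e_triv) (trivializing_lfgp C_coring e_triv).
  + exact (trivializing_F_Frobenius C_coring e_triv).
- move=> /F_naturally_full_full F_full_C [z eps_z].
  have z_triv := F_full_trivializing C_coring F_full_C eps_z.
  exact (trivializing_G_naturally_full C_coring z_triv).
by move=> /F_naturally_full_full; exact: F_full_separable.
Qed.
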